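(* Let $p_0,q\in\mathcal S^{d-1}$ and consider the preference dynamics with the fixed recommendation $q_t=q$ for all $t\ge 0$, i.e. $\tilde p_{t+1}=p_t+\eta_t\,(p_t^\top q)\,q$, $p_{t+1}=\tilde p_{t+1}/\|\tilde p_{t+1}\|_2$, with step sizes either constant ($\eta_t=\eta$) or decreasing ($\eta_t=\frac{\eta}{t+s}$). Then for all $t\ge 0$, \[p_t=\left(\frac{\gamma_t}{\sqrt{(q^\top p_0)^2+\gamma_t^2(1-(q^\top p_0)^2)}}\right)p_0+\left(\frac{q^\top p_0\,(1-\gamma_t)}{\sqrt{(q^\top p_0)^2+\gamma_t^2(1-(q^\top p_0)^2)}}\right)q,\] where $\gamma_t=(\eta+1)^{-t}$ in the constant case and $\gamma_t=\prod_{k=0}^{\eta-1}\frac{s+k}{t+s+k}$ in the decreasing case. Moreover, the magnitude of the coefficient of $p_0$ is nonincreasing in $t$ and the magnitude of the coefficient of $q$ is nondecreasing in $t$.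
   Context: $\mathcal S^{d-1}$ denotes the unit sphere in $\mathbb{R}^d$. In the constant step-size setting $\eta>0$ is a constant; in the decreasing step-size setting $\eta$ and $s$ are positive integers. *)

From mathcomp Require Import all_boot all_order all_algebra.
Set Implicit Arguments. Unset Strict Implicit. Unset Printing Implicit Defensive.
Import Order.TTheory GRing.Theory Num.Theory.
Local Open Scope ring_scope.

Section PrefDyn.
Variables (R : rcfType) (d : nat).

Definition dotv (u v : 'rV[R]_d) : R := \sum_(i < d) u 0 i * v 0 i.
Definition norm2 (u : 'rV[R]_d) : R := Num.sqrt (dotv u u).

Definition on_sphere (u : 'rV[R]_d) : Prop := norm2 u = 1.

Definition pref_step (eta : R) (q p : 'rV[R]_d) : 'rV[R]_d :=
  let pt := p + (eta * dotv p q) *: q in (norm2 pt)^-1 *: pt.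

Fixpoint pref_traj (etas : nat -> R) (q p0 : 'rV[R]_d) (t : nat) : 'rV[R]_d :=
  match t with
  | O => p0
  | t'.+1 => pref_step (etas t') q (pref_traj etas q p0 t')
  end.

(* coefficients of p0 and q in the closed form, given gamma_t and c = q^T p0 *)
Definition denom (c g : R) : R := Num.sqrt (c ^+ 2 + g ^+ 2 * (1 - c ^+ 2)).
Definition coef_p0 (c g : R) : R := g / denom c g.
Definition coef_q (c g : R) : R := c * (1 - g) / denom c g.
End PrefDyn.

Definition gamma_const (R : rcfType) (eta : R) (t : nat) : R := (eta + 1) ^- t.

Definition gamma_dec (R : rcfType) (eta s t : nat) : R :=
  \prod_(k < eta) ((s + k)%:R / (t + s + k)%:R).

Definition eta_dec (R : rcfType) (eta s t : nat) : R := eta%:R / (t + s)%:R.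

From mathcomp Require Import all_boot all_order all_algebra.
From mathcomp Require Import ring lra zify.
Set Implicit Arguments. Unset Strict Implicit. Unset Printing Implicit Defensive.
Import Order.TTheory GRing.Theory Num.Theory.
Local Open Scope ring_scope.

(* With c = q^T p0, the unnormalised vector u(g) = g p0 + c (1 - g) q satisfies
   u(g)^T q = c, so one step of the dynamics sends the direction of u(g) to that of
   u(g) + eta c q = (1 + eta) u(g'), where g' (1 + eta) = g.  Normalisation forgets
   positive factors, hence p_t is the normalisation of u(gamma_t) for every gamma with
   gamma_0 = 1 and gamma_(t+1) (1 + eta_t) = gamma_t; both step-size schedules give
   such a gamma, decreasing in (0, 1].  Since |u(g)|^2 = c^2 + g^2 (1 - c^2), the
   monotonicity of the two coefficients reduces to polynomial inequalities in g. *)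

Section InnerProduct.
Variables (R : rcfType) (d : nat).
Implicit Types (u v w : 'rV[R]_d) (k : R).

Lemma dotvC u v : dotv u v = dotv v u.
Proof. by apply: eq_bigr => i _; rewrite mulrC. Qed.

Lemma dotvDl u v w : dotv (u + v) w = dotv u w + dotv v w.
Proof. by rewrite /dotv -big_split; apply: eq_bigr => i _; rewrite mxE mulrDl. Qed.

Lemma dotvZl k u v : dotv (k *: u) v = k * dotv u v.
Proof. by rewrite /dotv mulr_sumr; apply: eq_bigr => i _; rewrite mxE mulrA. Qed.

Lemma dotvZr k u v : dotv u (k *: v) = k * dotv u v.
Proof. by rewrite dotvC dotvZl dotvC. Qed.

Lemma dotvv_ge0 u : 0 <= dotv u u.
Proof. by apply: sumr_ge0 => i _; rewrite -expr2 sqr_ge0. Qed.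

Lemma dotvv_sphere u : on_sphere u -> dotv u u = 1.
Proof. by rewrite /on_sphere /norm2 => u1; rewrite -(sqr_sqrtr (dotvv_ge0 u)) u1 expr1n. Qed.

Lemma dotv_sphere_sqr_le1 u v : on_sphere u -> on_sphere v -> dotv u v ^+ 2 <= 1.
Proof.
move=> u1 v1; have := dotvv_ge0 (u + (- dotv u v) *: v).
rewrite !(dotvDl, dotvZl, dotvC _ (_ + _), dotvC _ (_ *: _)) (dotvC v u).
rewrite !dotvv_sphere //; nra.
Qed.

Lemma norm2Z k u : norm2 (k *: u) = `|k| * norm2 u.
Proof. by rewrite /norm2 dotvZl dotvZr mulrA -expr2 sqrtrM ?sqr_ge0 // sqrtr_sqr. Qed.

Definition normalize u := (norm2 u)^-1 *: u.

Lemma normalizeZ k u : 0 < k -> normalize (k *: u) = normalize u.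
Proof.
move=> k_gt0; rewrite /normalize norm2Z gtr0_norm // invfM scalerA.
by rewrite mulrAC mulVf ?gt_eqF // mul1r.
Qed.

Lemma normalize_sphere u : on_sphere u -> normalize u = u.
Proof. by rewrite /normalize => ->; rewrite invr1 scale1r. Qed.

End InnerProduct.

Section Coefficients.
Variables (R : rcfType) (c : R).
Hypothesis c_le1 : c ^+ 2 <= 1.

Lemma denom_sqr_gt0 (g : R) : 0 < g -> 0 < c ^+ 2 + g ^+ 2 * (1 - c ^+ 2).
Proof.
move=> g_gt0; have c2_ge0 := sqr_ge0 c; have g2_gt0 := exprn_gt0 2 g_gt0.
have [g2_le1|g2_gt1] := lerP (g ^+ 2) 1.
- have : 0 <= c ^+ 2 * (1 - g ^+ 2) by apply: mulr_ge0; lra.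
  lra.
- have : 0 <= (g ^+ 2 - 1) * (1 - c ^+ 2) by rewrite mulr_ge0 ?subr_ge0 // ltW.
  lra.
Qed.

Lemma sqr_denom (g : R) : 0 < g -> denom c g ^+ 2 = c ^+ 2 + g ^+ 2 * (1 - c ^+ 2).
Proof. by move=> g_gt0; rewrite sqr_sqrtr // ltW // denom_sqr_gt0. Qed.

Lemma denom_gt0 (g : R) : 0 < g -> 0 < denom c g.
Proof. by move=> g_gt0; rewrite sqrtr_gt0 denom_sqr_gt0. Qed.

Lemma ler_norm_div_denom (x x' g g' : R) : 0 < g -> 0 < g' ->
  x ^+ 2 * (c ^+ 2 + g' ^+ 2 * (1 - c ^+ 2)) <= x' ^+ 2 * (c ^+ 2 + g ^+ 2 * (1 - c ^+ 2)) ->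
  `|x / denom c g| <= `|x' / denom c g'|.
Proof.
move=> g_gt0 g'_gt0; rewrite -!sqr_denom // => le_sqr.
rewrite -ler_sqr ?nnegrE // !real_normK ?num_real // !expr_div_n.
by rewrite ler_pdivrMr ?exprn_gt0 ?denom_gt0 // mulrAC ler_pdivlMr ?exprn_gt0 ?denom_gt0.
Qed.

Lemma coef_p0_mono (g g' : R) : 0 < g' -> g' <= g -> `|coef_p0 c g'| <= `|coef_p0 c g|.
Proof.
move=> g'_gt0 le_g'g; have g_gt0 := lt_le_trans g'_gt0 le_g'g.
apply: ler_norm_div_denom => //.
have : g' ^+ 2 <= g ^+ 2 by rewrite ler_pXn2r // nnegrE ltW.
have := sqr_ge0 c; nra.
Qed.

Lemma coef_q_anti (g g' : R) : 0 < g' -> g' <= g -> g <= 1 -> `|coef_q c g| <= `|coef_q c g'|.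
Proof.
move=> g'_gt0 le_g'g g_le1; have g_gt0 := lt_le_trans g'_gt0 le_g'g.
apply: ler_norm_div_denom => //.
have le_1g : (1 - g) ^+ 2 <= (1 - g') ^+ 2 by rewrite ler_pXn2r ?nnegrE //; lra.
have le_cross : ((1 - g) * g') ^+ 2 <= ((1 - g') * g) ^+ 2.
  by rewrite ler_pXn2r ?nnegrE //; nra.
have key : (1 - g) ^+ 2 * c ^+ 2 + ((1 - g) * g') ^+ 2 * (1 - c ^+ 2)
        <= (1 - g') ^+ 2 * c ^+ 2 + ((1 - g') * g) ^+ 2 * (1 - c ^+ 2).
  have c2_ge0 := sqr_ge0 c.
  by apply: lerD; apply: ler_wpM2r; rewrite ?subr_ge0.
have := ler_wpM2l (sqr_ge0 c) key.
by congr (_ <= _); ring.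
Qed.

End Coefficients.

Section Ansatz.
Variables (R : rcfType) (d : nat) (p0 q : 'rV[R]_d).
Hypotheses (p0_sphere : on_sphere p0) (q_sphere : on_sphere q).

Definition ansatz (g : R) : 'rV[R]_d := g *: p0 + (dotv q p0 * (1 - g)) *: q.

Lemma dotv_ansatz_q g : dotv (ansatz g) q = dotv q p0.
Proof. by rewrite dotvDl !dotvZl dotvv_sphere // (dotvC p0 q); ring. Qed.

Lemma norm2_ansatz g : norm2 (ansatz g) = denom (dotv q p0) g.
Proof.
rewrite /norm2 /denom; congr Num.sqrt.
rewrite !(dotvDl, dotvZl, dotvC _ (_ + _), dotvC _ (_ *: _)).
by rewrite !dotvv_sphere // (dotvC p0 q); ring.
Qed.

Lemma normalize_ansatz g :
  normalize (ansatz g) = coef_p0 (dotv q p0) g *: p0 + coef_q (dotv q p0) g *: q.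
Proof.
by rewrite /normalize norm2_ansatz scalerDr !scalerA /coef_p0 /coef_q !(mulrC _^-1).
Qed.

Lemma pref_step_ansatz eta g g' : 0 < 1 + eta -> 0 < g -> g' * (1 + eta) = g ->
  pref_step eta q (normalize (ansatz g)) = normalize (ansatz g').
Proof.
move=> eta1_gt0 g_gt0 gS.
rewrite /pref_step -/(normalize _) {2}/normalize dotvZl dotv_ansatz_q.
set k := (norm2 (ansatz g))^-1.
have k_gt0 : 0 < k.
  by rewrite invr_gt0 norm2_ansatz denom_gt0 ?dotv_sphere_sqr_le1.
have -> : k *: ansatz g + (eta * (k * dotv q p0)) *: q = k *: ((1 + eta) *: ansatz g').
  by rewrite /ansatz -gS !scalerDr !scalerA -addrA -scalerDl; congr (_ *: _ + _ *: _); ring.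
by rewrite !normalizeZ.
Qed.

End Ansatz.

Section Discount.
Variables (R : realFieldType) (etas gamma : nat -> R).
Hypotheses (etas_ge0 : forall t, 0 <= etas t) (gamma0 : gamma 0%N = 1)
  (gammaS : forall t, gamma t.+1 * (1 + etas t) = gamma t).

Lemma discount_gt0 t : 0 < gamma t.
Proof.
elim: t => [|t IH]; first by rewrite gamma0.
by move: IH; rewrite -gammaS pmulr_lgt0 // ltr_wpDr.
Qed.

Lemma discount_decr t : gamma t.+1 <= gamma t.
Proof.
rewrite -[leRHS]gammaS mulrDr mulr1 lerDl.
exact: mulr_ge0 (ltW (discount_gt0 _)) (etas_ge0 t).
Qed.

Lemma discount_le1 t : gamma t <= 1.
Proof. by elim: t => [|t IH]; [rewrite gamma0 | exact: le_trans (discount_decr t) IH]. Qed.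

End Discount.

Lemma pref_traj_ansatz (R : rcfType) (d : nat) (p0 q : 'rV[R]_d) (etas gamma : nat -> R) :
  on_sphere p0 -> on_sphere q -> (forall t, 0 <= etas t) -> gamma 0%N = 1 ->
  (forall t, gamma t.+1 * (1 + etas t) = gamma t) ->
  forall t, pref_traj etas q p0 t = normalize (ansatz p0 q (gamma t)).
Proof.
move=> p0_sphere q_sphere etas_ge0 gamma0 gammaS; elim=> [|t IH] /=.
  by rewrite gamma0 /ansatz subrr mulr0 scale0r addr0 scale1r normalize_sphere.
rewrite IH (pref_step_ansatz p0_sphere q_sphere _ _ (gammaS t)) ?ltr_wpDr //.
exact: discount_gt0 etas_ge0 gamma0 gammaS t.
Qed.

Lemma pref_traj_closed_form (R : rcfType) (d : nat) (p0 q : 'rV[R]_d) (etas gamma : nat -> R) :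
  on_sphere p0 -> on_sphere q -> (forall t, 0 <= etas t) -> gamma 0%N = 1 ->
  (forall t, gamma t.+1 * (1 + etas t) = gamma t) ->
  let c := dotv q p0 in
  (forall t, pref_traj etas q p0 t = coef_p0 c (gamma t) *: p0 + coef_q c (gamma t) *: q) /\
  (forall t, `|coef_p0 c (gamma t.+1)| <= `|coef_p0 c (gamma t)| /\
             `|coef_q c (gamma t)| <= `|coef_q c (gamma t.+1)|).
Proof.
move=> p0_sphere q_sphere etas_ge0 gamma0 gammaS c.
have c_le1 : c ^+ 2 <= 1 by rewrite dotv_sphere_sqr_le1.
have gamma_gt0 := discount_gt0 etas_ge0 gamma0 gammaS.
have gamma_decr := discount_decr etas_ge0 gamma0 gammaS.
split=> t; first by rewrite (pref_traj_ansatz _ _ _ gamma0 gammaS) // normalize_ansatz.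
split; first exact: coef_p0_mono.
exact: coef_q_anti (discount_le1 etas_ge0 gamma0 gammaS t).
Qed.

Lemma gamma_constS (R : rcfType) (eta : R) t : 0 <= eta ->
  gamma_const eta t.+1 * (1 + eta) = gamma_const eta t.
Proof.
move=> eta_ge0; rewrite /gamma_const exprSr invfM addrC -mulrA mulVf ?mulr1 //.
rewrite gt_eqF //; lra.
Qed.

Section DecreasingSteps.
Variables (R : rcfType) (s : nat).
Hypothesis s_gt0 : (0 < s)%N.

Let natr_sum_neq0 (m n : nat) : (m + s + n)%:R != 0 :> R.
Proof. by rewrite pnatr_eq0 -lt0n; lia. Qed.

Lemma gamma_dec0 eta : gamma_dec R eta s 0 = 1.
Proof. by apply: big1 => k _; rewrite add0n divff // (natr_sum_neq0 0). Qed.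

Lemma gamma_dec_shift eta t :
  gamma_dec R eta s t.+1 * (t + s + eta)%:R = gamma_dec R eta s t * (t + s)%:R.
Proof.
elim: eta => [|n IH]; first by rewrite /gamma_dec !big_ord0 addn0.
rewrite /gamma_dec !big_ord_recr /= -!/(gamma_dec R n s _).
have -> : gamma_dec R n s t.+1 = gamma_dec R n s t * (t + s)%:R / (t + s + n)%:R.
  by rewrite -IH mulfK.
have -> : (t.+1 + s + n)%:R = (t + s + n.+1)%:R :> R by rewrite addSn addnS.
have := natr_sum_neq0 t n; have := natr_sum_neq0 t n.+1.
by rewrite -addn1 !natrD => ? ?; field; apply/andP.
Qed.

Lemma gamma_decS eta t :
  gamma_dec R eta s t.+1 * (1 + eta_dec R eta s t) = gamma_dec R eta s t.
Proof.
have ts_neq0 : (t + s)%:R != 0 :> R by rewrite -[(t + s)%N]addn0 natr_sum_neq0.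
have -> : 1 + eta_dec R eta s t = (t + s + eta)%:R / (t + s)%:R.
  by rewrite /eta_dec (natrD _ (t + s) eta); field; rewrite -natrD.
by rewrite mulrA gamma_dec_shift mulfK.
Qed.

End DecreasingSteps.

Theorem corollary1 (R : rcfType) (d : nat) (p0 q : 'rV[R]_d) :
  on_sphere p0 -> on_sphere q ->
  (* constant step size eta_t = eta > 0 *)
  (forall eta : R, 0 < eta ->
     let c := dotv q p0 in
     let g := gamma_const eta in
     (forall t : nat,
        pref_traj (fun _ => eta) q p0 t
        = coef_p0 c (g t) *: p0 + coef_q c (g t) *: q) /\
     (forall t : nat,
        `|coef_p0 c (g t.+1)| <= `|coef_p0 c (g t)| /\
        `|coef_q c (g t)| <= `|coef_q c (g t.+1)|)) /\
  (* decreasing step size eta_t = eta / (t + s), eta, s positive integers *)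
  (forall eta s : nat, (0 < eta)%N -> (0 < s)%N ->
     let c := dotv q p0 in
     let g := gamma_dec R eta s in
     (forall t : nat,
        pref_traj (eta_dec R eta s) q p0 t
        = coef_p0 c (g t) *: p0 + coef_q c (g t) *: q) /\
     (forall t : nat,
        `|coef_p0 c (g t.+1)| <= `|coef_p0 c (g t)| /\
        `|coef_q c (g t)| <= `|coef_q c (g t.+1)|)).
Proof.
move=> p0_sphere q_sphere; split=> [eta eta_gt0 | eta s _ s_gt0];
  apply: pref_traj_closed_form => //.
- by move=> _; exact: ltW.
- by rewrite /gamma_const expr0 invr1.
- by move=> t; exact: gamma_constS (ltW eta_gt0).
- by move=> t; rewrite /eta_dec divr_ge0.
- exact: gamma_dec0.
- exact: gamma_decS.
Qed.
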